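(* Let $p>1$ and $q>0$ be integers, and let $A\in\mathbb{R}^{(p+q)\times(p+q)}$ with columns $\alpha_1,\dots,\alpha_{p+q}$. Suppose $A$ is a positive operator of $M(p,q)$, i.e. $A\,M(p,q)\subseteq M(p,q)$. Then: (i) for each $i=1,\dots,p$, the transpose of the $i$-th row of $A$ belongs to $L(p,q)$; (ii) for each $i=1,\dots,p$, the column $\alpha_i$ belongs to $M(p,q)$; (iii) for each $i=1,\dots,p$ and every $u=(u_1,\dots,u_q)^\top\in\mathbb{R}^q$ with $\|u\|=1$, the vector $\alpha_i+\sum_{j=1}^q u_j\alpha_{p+j}$ belongs to $M(p,q)$; (iv) for each $i=1,\dots,p$ and each $j=1,\dots,q$, the vector $\alpha_i+\alpha_{p+j}$ belongs to $M(p,q)$; (v) if $A$ is Lyapunov-like on $M(p,q)$, then $e^{tA}\in\operatorname{Aut}(M(p,q))$ for every $t\in\mathbb{R}$, and in particular $e^{tA}$ is a positive operator of $M(p,q)$ for every $t\in\mathbb{R}$.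
   Context: Let $e=(1,\dots,1)\in\mathbb{R}^p$. Identify $\mathbb{R}^p\times\mathbb{R}^q$ with $\mathbb{R}^{p+q}$ (column vectors) with the standard inner product $\langle\cdot,\cdot\rangle$ and Euclidean norm $\|\cdot\|$. Define the extended Lorentz cones \[L(p,q)=\{(x,u)\in\mathbb{R}^p\times\mathbb{R}^q:\ x\ge\|u\|e\}\] (componentwise inequality) and \[M(p,q)=\{(x,u)\in\mathbb{R}^p\times\mathbb{R}^q:\ \langle x,e\rangle\ge\|u\|,\ x\ge 0\}.\] A matrix $A$ is a positive operator of a cone $C$ if $AC\subseteq C$. For a cone $K\subseteq\mathbb{R}^m$, its dual cone is $K^*=\{y:\langle x,y\rangle\ge0\ \forall x\in K\}$, and its complementarity set is $C(K)=\{(x,s):x\in K,\ s\in K^*,\ \langle x,s\rangle=0\}$. A matrix $A$ is Lyapunov-like on $K$ if $\langle Ax,s\rangle=0$ for all $(x,s)\in C(K)$. $\operatorname{Aut}(K)$ denotes the group of invertible linear maps $B$ with $BK=K$. *)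

From HB Require Import structures.
From mathcomp Require Import all_boot all_order all_algebra.
From mathcomp Require Import all_classical all_reals all_analysis.
Set Implicit Arguments. Unset Strict Implicit. Unset Printing Implicit Defensive.
Import Order.TTheory GRing.Theory Num.Theory.
Import numFieldNormedType.Exports.
Local Open Scope ring_scope.

Section Defs.
Variable R : realType.

Definition ip (m : nat) (x y : 'cV[R]_m) : R := \sum_(i < m) x i 0 * y i 0.
Definition enorm (m : nat) (x : 'cV[R]_m) : R := Num.sqrt (ip x x).

Definition Lcone (p q : nat) (v : 'cV[R]_(p + q)) : Prop :=
  forall i : 'I_p, enorm (dsubmx v) <= usubmx v i 0.

Definition Mcone (p q : nat) (v : 'cV[R]_(p + q)) : Prop :=
  enorm (dsubmx v) <= \sum_(i < p) usubmx v i 0 /\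
  forall i : 'I_p, 0 <= usubmx v i 0.

Definition positive_operator (m : nat) (K : 'cV[R]_m -> Prop) (A : 'M[R]_m) :=
  forall x, K x -> K (A *m x).

Definition dual_cone (m : nat) (K : 'cV[R]_m -> Prop) (y : 'cV[R]_m) : Prop :=
  forall x, K x -> 0 <= ip x y.

Definition compl_set (m : nat) (K : 'cV[R]_m -> Prop) (x s : 'cV[R]_m) : Prop :=
  K x /\ dual_cone K s /\ ip x s = 0.

Definition lyapunov_like (m : nat) (K : 'cV[R]_m -> Prop) (A : 'M[R]_m) :=
  forall x s, compl_set K x s -> ip (A *m x) s = 0.

Definition in_Aut (m : nat) (K : 'cV[R]_m -> Prop) (B : 'M[R]_m) : Prop :=
  B \in unitmx /\ forall y, K y <-> exists x, K x /\ y = B *m x.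

Definition expm (m : nat) (t : R) (A : 'M[R]_m) : 'M[R]_m :=
  \matrix_(i, j) limn (fun N : nat =>
     (\sum_(k < N) ((t ^+ k) / (k`!)%:R) *: (A ^+ k)) i j : R).

End Defs.

(* For (i)-(iv): [A] maps [(e_k, u)], which lies in M(p,q) when [|u| <= 1],
   to [alpha_k + sum_j u_j alpha_(p+j)]; for (i), the i-th entry of this image
   is [a_ik + <b, u>] with [b] the tail of row i, and its nonnegativity for all
   such [u] is [|b| <= a_ik].
   For (v), Lyapunov-likeness tested on the complementary pairs
   [((e_k, u), (e_l, 0))], [l != k], and [((e_k, u), (1, -u))], [|u| = 1],
   forces [A = diag(d I_p, D)] with [D^T + D = 2d I_q]; [p > 1] is what
   provides [l != k].  Then [E = e^(tA)] has top rows [e^(td) e_l^T] and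
   [E^T E = e^(t(A^T + A)) = e^(2td) I], a conformal map preserving M(p,q),
   as does its inverse [e^(-tA)].  The product rule for exponentials of
   commuting matrices comes from the Cauchy product of the truncated series,
   whose tail is dominated entrywise by the scalar series of the l1-norms. *)

From HB Require Import structures.
From mathcomp Require Import all_boot all_order all_algebra.
From mathcomp Require Import all_classical all_reals all_analysis.
From mathcomp Require Import ring lra.
Import Order.TTheory GRing.Theory Num.Theory.
Import numFieldNormedType.Exports.
Local Open Scope classical_set_scope.
Local Open Scope ring_scope.

Lemma sum_antidiagonal {V : nmodType} (g : nat -> nat -> V) M N : (N <= M)%N ->
  \sum_(n < N) \sum_(i < n.+1) g i (n - i)%N =
  \sum_(j < M) \sum_(k < M | (j + k < N)%N) g j k.
Proof.
elim: N => [|N IH] leNM.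
  by rewrite big_ord0 big1 // => j _; rewrite big_pred0.
have split_diag (j : 'I_M) : \sum_(k < M | (j + k < N.+1)%N) g j k =
    \sum_(k < M | (j + k < N)%N) g j k + \sum_(k < M | (j + k == N)%N) g j k.
  rewrite (bigID (fun k : 'I_M => (j + k < N)%N)) /=.
  by congr (_ + _); apply: eq_bigl => k; rewrite ltnS; case: ltngtP.
have diag (j : 'I_M) :
    \sum_(k < M | (j + k == N)%N) g j k = if (j <= N)%N then g j (N - j)%N else 0.
  case: leqP => hj.
    rewrite (big_pred1 (Ordinal (leq_ltn_trans (leq_subr j N) leNM))) // => k /=.
    by rewrite -val_eqE /=; apply/eqP/eqP => [<-|->]; [rewrite addKn | rewrite subnKC].
  rewrite big_pred0 // => k; apply/negbTE; rewrite neq_ltn.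
  by rewrite (leq_trans hj) ?leq_addr ?orbT.
rewrite big_ord_recr /= IH ?(ltnW leNM) // (eq_bigr _ (fun j _ => split_diag j)).
rewrite big_split /= (eq_bigr _ (fun j _ => diag j)); congr (_ + _).
rewrite (big_ord_widen _ (fun i => g i (N - i)%N) leNM) big_mkcond /=.
by apply: eq_bigr => j _; rewrite ltnS.
Qed.

Section ExpPartialSums.
Context {F : numFieldType} {V : algType F}.

Definition exp_sum (x : V) N := \sum_(k < N) (k`!%:R)^-1 *: x ^+ k.

Definition exp_prod_sum (x y : V) N (P : rel nat) :=
  \sum_(j < N) \sum_(k < N | P j k)
    ((j`!%:R)^-1 * (k`!%:R)^-1 : F) *: (x ^+ j * y ^+ k).

Lemma exp_sumM x y N : exp_sum x N * exp_sum y N = exp_prod_sum x y N (fun _ _ => true).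
Proof.
rewrite mulr_suml; apply: eq_bigr => j _; rewrite mulr_sumr; apply: eq_bigr => k _.
by rewrite -scalerAl -scalerAr scalerA mulrC.
Qed.

Lemma invfact_binomial n i : (i <= n)%N ->
  (n`!%:R)^-1 * 'C(n, i)%:R = ((n - i)`!%:R)^-1 * (i`!%:R)^-1 :> F.
Proof.
move=> le_in; rewrite -(bin_fact le_in) !natrM.
have fact_neq0 k : (k`!%:R : F) != 0 by rewrite pnatr_eq0 -lt0n fact_gt0.
have bin_neq0 : ('C(n, i)%:R : F) != 0 by rewrite pnatr_eq0 -lt0n bin_gt0.
by rewrite !invfM mulrC !mulrA mulfV // mul1r mulrC.
Qed.

Lemma exp_sumD x y N : GRing.comm x y ->
  exp_sum (x + y) N = exp_prod_sum x y N (fun j k => (j + k < N)%N).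
Proof.
move=> cxy; pose g j k := ((j`!%:R)^-1 * (k`!%:R)^-1 : F) *: (x ^+ j * y ^+ k).
transitivity (\sum_(m < N) \sum_(i < m.+1) g (m - i)%N i).
  apply: eq_bigr => m _; rewrite exprDn_comm // scaler_sumr.
  apply: eq_bigr => i _; rewrite /g -[_ *+ 'C(m, i)]scaler_nat scalerA.
  by rewrite invfact_binomial // -ltnS.
rewrite (@sum_antidiagonal _ (fun i j => g j i) N N (leqnn N)).
under eq_bigr do rewrite big_mkcond; under [RHS]eq_bigr do rewrite big_mkcond.
by rewrite exchange_big; apply: eq_bigr => j _; apply: eq_bigr => k _; rewrite addnC.
Qed.

Lemma exp_sumM_subD x y N : GRing.comm x y ->
  exp_sum x N * exp_sum y N - exp_sum (x + y) N =
  exp_prod_sum x y N (fun j k => (N <= j + k)%N).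
Proof.
move=> cxy; rewrite exp_sumM exp_sumD // -sumrB; apply: eq_bigr => j _.
rewrite (bigID (fun k : 'I_N => (j + k < N)%N)) /= addrC addrK.
by apply: eq_bigl => k; rewrite -leqNgt.
Qed.

End ExpPartialSums.

Section MatrixExponential.
Context {R : realType} {n : nat}.
Local Notation M := 'M[R]_n.+1.

Definition l1norm (B : M) : R := \sum_i \sum_j `|B i j|.

Lemma l1norm_ge0 (B : M) : 0 <= l1norm B.
Proof. by apply: sumr_ge0 => i _; apply: sumr_ge0. Qed.

Lemma normr_exprmx_le (B : M) k i j : `|(B ^+ k) i j| <= l1norm B ^+ k.
Proof.
have col_le j' : \sum_l `|B l j'| <= l1norm B.
  by apply: ler_sum => l _; rewrite (bigD1 j') //= lerDl sumr_ge0.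
elim: k i j => [|k IH] i j.
  by rewrite expr0 mxE; case: (i == j); rewrite ?normr1 ?normr0.
rewrite exprSr -mulmxE mxE (le_trans (ler_norm_sum _ _ _)) // exprSr.
apply: le_trans (_ : \sum_l l1norm B ^+ k * `|B l j| <= _).
  by apply: ler_sum => l _; rewrite normrM ler_wpM2r.
by rewrite -mulr_sumr ler_wpM2l ?exprn_ge0 ?l1norm_ge0.
Qed.

Lemma normr_mulexprmx_le (B C : M) j k i l :
  `|(B ^+ j * C ^+ k) i l| <= n.+1%:R * (l1norm B ^+ j * l1norm C ^+ k).
Proof.
rewrite -mulmxE mxE (le_trans (ler_norm_sum _ _ _)) //.
apply: le_trans (_ : \sum_(r < n.+1) (l1norm B ^+ j * l1norm C ^+ k) <= _).
  by apply: ler_sum => r _; rewrite normrM ler_pM ?normr_exprmx_le.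
by rewrite sumr_const card_ord mulr_natl.
Qed.

Lemma exp_sum_mxE (B : M) N i j :
  exp_sum B N i j = \sum_(k < N) (k`!%:R)^-1 * (B ^+ k) i j.
Proof. by rewrite summxE; apply: eq_bigr => k _; rewrite mxE. Qed.

Lemma exp_sum_cvg_expR (c : R) : exp_sum (c : R^o) N @[N --> \oo] --> expR c.
Proof.
have -> : (fun N => exp_sum (c : R^o) N) = series (exp_coeff c).
  apply/funext => N; rewrite /series /= big_mkord; apply: eq_bigr => k _.
  by rewrite /exp_coeff /= mulrC.
exact: is_cvg_series_exp_coeff.
Qed.

Lemma exp_sum_mx_cvg (B : M) i j : cvgn (fun N => exp_sum B N i j).
Proof.
pose u k := (k`!%:R)^-1 * (B ^+ k) i j.
have -> : (fun N => exp_sum B N i j) = series u.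
  by apply/funext => N; rewrite exp_sum_mxE /series /= big_mkord.
apply: (@normed_cvg _ R^o).
apply: (series_le_cvg _ _ _ (is_cvg_series_exp_coeff (l1norm B))) => //=.
- by move=> k; apply: exp_coeff_ge0; apply: l1norm_ge0.
- move=> k; rewrite /u /exp_coeff /= normrM ger0_norm ?invr_ge0 // mulrC.
  by rewrite ler_wpM2r ?invr_ge0 ?normr_exprmx_le.
Qed.

Definition expmx (B : M) : M := \matrix_(i, j) limn (fun N => exp_sum B N i j).

Lemma exp_prod_sum_mx_bound (B C : M) N P i j :
  `|exp_prod_sum B C N P i j| <=
  n.+1%:R * exp_prod_sum (l1norm B : R^o) (l1norm C) N P.
Proof.
rewrite summxE mulr_sumr (le_trans (ler_norm_sum _ _ _)) // ler_sum // => a _.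
rewrite summxE mulr_sumr (le_trans (ler_norm_sum _ _ _)) // ler_sum // => b _.
rewrite mxE normrM ger0_norm ?mulr_ge0 ?invr_ge0 // mulrCA.
by rewrite ler_wpM2l ?mulr_ge0 ?invr_ge0 ?normr_mulexprmx_le.
Qed.

Lemma expmxD (B C : M) : B * C = C * B -> expmx B *m expmx C = expmx (B + C).
Proof.
move=> cBC; apply/matrixP => i j.
have prod_cvg : (exp_sum B N * exp_sum C N) i j @[N --> \oo] -->
                (expmx B *m expmx C) i j.
  rewrite mxE; under eq_cvg do rewrite -mulmxE mxE.
  apply: cvg_big => // [|l _]; first exact: add_continuous.
  by rewrite !mxE; apply: cvgM; apply: exp_sum_mx_cvg.
pose h N := n.+1%:R * (exp_sum (l1norm B : R^o) N * exp_sum (l1norm C : R^o) N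
                       - exp_sum (l1norm B + l1norm C : R^o) N).
have h_cvg0 : h N @[N --> \oo] --> 0.
  rewrite -(mulr0 n.+1%:R) -(subrr (expR (l1norm B + l1norm C))) {1}expRD.
  apply: cvgM; first exact: cvg_cst.
  by apply: cvgB; [apply: cvgM|]; apply: exp_sum_cvg_expR.
have diff_cvg0 : (exp_sum B N * exp_sum C N) i j - exp_sum (B + C) N i j
                 @[N --> \oo] --> 0.
  apply: (@squeeze_cvgr _ _ _ _ (fun N => - h N) h); last 2 first.
  - by rewrite -oppr0; apply: cvgN.
  - exact: h_cvg0.
  near=> N; rewrite -ler_norml.
  have -> : (exp_sum B N * exp_sum C N) i j - exp_sum (B + C) N i j =
            (exp_sum B N * exp_sum C N - exp_sum (B + C) N) i j by rewrite !mxE.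
  rewrite exp_sumM_subD // /h exp_sumM_subD; last exact: mulrC.
  exact: exp_prod_sum_mx_bound.
rewrite [RHS]mxE; apply/esym/cvg_lim => //.
have -> : (fun N => exp_sum (B + C) N i j) = (fun N => (exp_sum B N * exp_sum C N) i j)
    - (fun N => (exp_sum B N * exp_sum C N) i j - exp_sum (B + C) N i j).
  by apply/funext => N /=; rewrite subKr.
by rewrite -[X in _ --> X]subr0; apply: cvgB.
Unshelve. all: by end_near.
Qed.

Lemma trmxX (B : M) k : (B ^+ k)^T = B^T ^+ k.
Proof.
elim: k => [|k IH]; first by rewrite !expr0 tr_scalar_mx.
by rewrite exprS exprSr -!mulmxE trmx_mul IH.
Qed.

Lemma expmx_tr (B : M) : (expmx B)^T = expmx B^T.
Proof.
apply/matrixP => i j; rewrite !mxE; congr (limn _); apply/funext => N.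
by rewrite !exp_sum_mxE; apply: eq_bigr => k _; rewrite -trmxX mxE.
Qed.

Lemma expmx0 : expmx 0 = 1.
Proof.
apply/matrixP => i j; rewrite mxE; apply: lim_near_cst => //.
near=> N; rewrite -(prednK (_ : (0 < N)%N)); last by near: N; exists 1%N.
rewrite /exp_sum big_ord_recl expr0 invr1 scale1r big1 ?addr0 // => k _.
by rewrite expr0n scaler0.
Unshelve. all: by end_near.
Qed.

Lemma expmx_row (B : M) l b : (forall k, B l k = b * (l == k)%:R) ->
  forall j, expmx B l j = expR b * (l == j)%:R.
Proof.
move=> rowB j.
have rowBk k : (B ^+ k) l j = b ^+ k * (l == j)%:R.
  elim: k j => [|k IH] j; first by rewrite expr0 !mxE mul1r.
  rewrite exprS -mulmxE mxE (bigD1 l) //= big1 ?addr0.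
    by rewrite rowB eqxx mulr1 IH mulrA exprS.
  by move=> r /negbTE nr; rewrite rowB eq_sym nr mulr0 mul0r.
rewrite mxE (_ : (fun N => _) = (fun N => exp_sum (b : R^o) N * (l == j)%:R)).
  by apply: cvg_lim => //; apply: cvgM; [exact: exp_sum_cvg_expR | exact: cvg_cst].
apply/funext => N; rewrite exp_sum_mxE mulr_suml; apply: eq_bigr => k _.
by rewrite rowBk mulrA.
Qed.

End MatrixExponential.

Section Expm.
Context {R : realType}.

Lemma expm_expmx {n} (t : R) (A : 'M[R]_n.+1) : expm t A = expmx (t *: A).
Proof.
apply/matrixP => i j; rewrite !mxE; congr (limn _); apply/funext => N.
rewrite exp_sum_mxE summxE; apply: eq_bigr => k _.
by rewrite !mxE exprZn mxE mulrA (mulrC _^-1).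
Qed.

Lemma expmD {m} (t s : R) (A : 'M[R]_m) : expm t A *m expm s A = expm (t + s) A.
Proof.
case: m A => [|n] A; first by apply/matrixP => [[]].
rewrite !expm_expmx expmxD ?scalerDl // -!mulmxE.
by rewrite -!scalemxAl -!scalemxAr !scalerA mulrC.
Qed.

Lemma expm0 {m} (A : 'M[R]_m) : expm 0 A = 1%:M.
Proof.
case: m A => [|n] A; first by apply/matrixP => [[]].
by rewrite expm_expmx scale0r expmx0.
Qed.

Lemma expmN_inv {m} (t : R) (A : 'M[R]_m) : expm t A *m expm (- t) A = 1%:M.
Proof. by rewrite expmD subrr expm0. Qed.

Lemma expm_row {m} (t : R) (A : 'M[R]_m) l d :
  (forall k, A l k = d * (l == k)%:R) ->
  forall j, expm t A l j = expR (t * d) * (l == j)%:R.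
Proof.
case: m A l => [|n] A l; first by case: l.
move=> rowA; rewrite expm_expmx; apply: expmx_row => k.
by rewrite mxE rowA mulrA.
Qed.

Lemma expm_gram {m} (t : R) (A : 'M[R]_m) (c : R) : A^T + A = c%:M ->
  (expm t A)^T *m expm t A = (expR (t * c))%:M.
Proof.
case: m A => [|n] A; first by move=> _; apply/matrixP => [[]].
move=> symA; rewrite !expm_expmx expmx_tr linearZ /=.
have trA : A^T = c%:M - A by rewrite -symA addrK.
rewrite expmxD; last first.
  rewrite -!mulmxE -!scalemxAl -!scalemxAr !scalerA trA.
  by rewrite mulmxBl mulmxBr mul_scalar_mx mul_mx_scalar.
rewrite -scalerDr symA; apply/matrixP => i j.
rewrite (@expmx_row _ _ _ _ (t * c)) => [|k]; first by rewrite mxE mulr_natr.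
by rewrite !mxE mulr_natr mulrnAr.
Qed.

End Expm.

Section InnerProduct.
Context {R : realType} {m : nat}.
Implicit Types (u v w : 'cV[R]_m).

Lemma ip_trmx v w : ip v w = (v^T *m w) 0 0.
Proof. by rewrite mxE; apply: eq_bigr => i _; rewrite mxE. Qed.

Lemma ipC v w : ip v w = ip w v.
Proof. by apply: eq_bigr => i _; rewrite mulrC. Qed.

Lemma ipZl c v w : ip (c *: v) w = c * ip v w.
Proof. by rewrite /ip mulr_sumr; apply: eq_bigr => i _; rewrite mxE mulrA. Qed.

Lemma ipZr c v w : ip v (c *: w) = c * ip v w.
Proof. by rewrite ipC ipZl ipC. Qed.

Lemma ipDl u v w : ip (u + v) w = ip u w + ip v w.
Proof. by rewrite /ip -big_split; apply: eq_bigr => i _; rewrite mxE mulrDl. Qed.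

Lemma ipDr u v w : ip w (u + v) = ip w u + ip w v.
Proof. by rewrite ipC ipDl !(ipC w). Qed.

Lemma ipNl v w : ip (- v) w = - ip v w.
Proof. by rewrite -scaleN1r ipZl mulN1r. Qed.

Lemma ipNr v w : ip v (- w) = - ip v w.
Proof. by rewrite ipC ipNl ipC. Qed.

Lemma ip0l w : ip 0 w = 0.
Proof. by rewrite -(scale0r 0) ipZl mul0r. Qed.

Lemma ip_delta_mx i w : ip (delta_mx i 0) w = w i 0.
Proof. by rewrite ip_trmx trmx_delta -rowE mxE. Qed.

Lemma ip_delta_mxx (i : 'I_m) : ip (delta_mx i 0 : 'cV[R]_m) (delta_mx i 0) = 1.
Proof. by rewrite ip_delta_mx mxE !eqxx. Qed.

Lemma sum_delta_mx (i : 'I_m) : \sum_k (delta_mx i 0 : 'cV[R]_m) k 0 = 1.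
Proof.
rewrite (bigD1 i) //= big1 ?mxE ?eqxx ?addr0 // => k /negbTE ki.
by rewrite mxE ki.
Qed.

Lemma ip_ge0 v : 0 <= ip v v.
Proof. by apply: sumr_ge0 => i _; rewrite -expr2 sqr_ge0. Qed.

Lemma ip_eq0 v : ip v v = 0 -> v = 0.
Proof.
move=> /eqP; rewrite psumr_eq0 => [/allP v0|i _]; last by rewrite -expr2 sqr_ge0.
apply/matrixP => i j; rewrite (ord1 j) mxE.
by apply/eqP; rewrite -sqrf_eq0 expr2 (eqP (v0 i _)) ?mem_index_enum.
Qed.

Lemma enorm_sq v : enorm v ^+ 2 = ip v v.
Proof. by rewrite sqr_sqrtr ?ip_ge0. Qed.

Lemma enorm0 : enorm (0 : 'cV[R]_m) = 0.
Proof. by rewrite /enorm ip0l sqrtr0. Qed.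

Lemma enormZ c v : enorm (c *: v) = `|c| * enorm v.
Proof. by rewrite /enorm ipZl ipZr mulrA -expr2 sqrtrM ?sqr_ge0 // sqrtr_sqr. Qed.

Lemma enorm_unit u : ip u u = 1 -> enorm u = 1.
Proof. by rewrite /enorm => ->; rewrite sqrtr1. Qed.

Lemma ip_le_enorm v u : ip u u = 1 -> ip v u <= enorm v.
Proof.
move=> u1; have [v0|vN0] := eqVneq (enorm v) 0.
  have /ip_eq0 -> : ip v v = 0 by rewrite -enorm_sq v0 expr0n.
  by rewrite ip0l enorm0.
have v_gt0 : 0 < enorm v by rewrite lt0r vN0 sqrtr_ge0.
have := ip_ge0 (v - enorm v *: u).
rewrite ipDl !ipDr !ipNl !ipNr !ipZl !ipZr u1 -enorm_sq (ipC u v) => h.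
by rewrite -(ler_pM2l v_gt0); nra.
Qed.

Lemma enorm_le_of_ip_ge0 (b : 'cV[R]_m) a :
  (forall u, enorm u <= 1 -> 0 <= a + ip b u) -> enorm b <= a.
Proof.
move=> hb; have [b0|bN0] := eqVneq (enorm b) 0.
  by have := hb 0; rewrite enorm0 ler01 ipC ip0l addr0 b0; apply.
have b_gt0 : 0 < enorm b by rewrite lt0r bN0 sqrtr_ge0.
have := hb (- (enorm b)^-1 *: b).
rewrite enormZ normrN ger0_norm ?invr_ge0 ?sqrtr_ge0 // mulVf // lexx.
by rewrite ipZr -enorm_sq mulNr expr2 mulKf // subr_ge0; apply.
Qed.

End InnerProduct.

Section ExtendedLorentzCone.
Context {R : realType} {p q : nat}.
Local Notation Mc := (@Mcone R p q).
Implicit Types (A : 'M[R]_(p + q)) (v w : 'cV[R]_(p + q)).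

Lemma ip_split v w :
  ip v w = ip (usubmx v) (usubmx w) + ip (dsubmx v) (dsubmx w).
Proof.
by rewrite /ip big_split_ord; congr (_ + _); apply: eq_bigr => i _; rewrite !mxE.
Qed.

Lemma Mcone_col_mx (x : 'cV[R]_p) (u : 'cV[R]_q) :
  Mc (col_mx x u) <-> enorm u <= \sum_i x i 0 /\ forall i, 0 <= x i 0.
Proof. by rewrite /Mcone col_mxKu col_mxKd. Qed.

Lemma Mcone_delta_col (i : 'I_p) (u : 'cV[R]_q) :
  enorm u <= 1 -> Mc (col_mx (delta_mx i 0) u).
Proof.
move=> u_le1; apply/Mcone_col_mx; split=> [|k]; last by rewrite mxE ler0n.
by rewrite sum_delta_mx.
Qed.

Lemma Mcone_ge0 (i : 'I_p) v : Mc v -> 0 <= v (lshift q i) 0.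
Proof. by move=> [_ /(_ i)]; rewrite mxE. Qed.

Lemma mulmx_delta_col_mx A (i : 'I_p) (u : 'cV[R]_q) :
  A *m col_mx (delta_mx i 0) u =
  col (lshift q i) A + \sum_(j < q) u j 0 *: col (rshift p j) A.
Proof.
rewrite -{1}[A]hsubmxK mul_row_col -colE; congr (_ + _).
  by apply/colP => r; rewrite !mxE.
apply/colP => r; rewrite !mxE summxE; apply: eq_bigr => j _.
by rewrite !mxE mulrC.
Qed.

Lemma Mcone_dual_delta (l : 'I_p) : dual_cone Mc (col_mx (delta_mx l 0) 0).
Proof.
move=> v /(Mcone_ge0 l).
by rewrite ip_split col_mxKu col_mxKd ipC ip_delta_mx (ipC _ 0) ip0l addr0 mxE.
Qed.

Lemma ip_col_mx_const1 v (u : 'cV[R]_q) :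
  ip v (col_mx (const_mx 1) (- u)) = \sum_i usubmx v i 0 - ip (dsubmx v) u.
Proof.
rewrite ip_split col_mxKu col_mxKd ipNr; congr (_ - _).
by apply: eq_bigr => i _; rewrite [const_mx 1 i 0]mxE mulr1.
Qed.

Lemma Mcone_dual_unit (u : 'cV[R]_q) :
  ip u u = 1 -> dual_cone Mc (col_mx (const_mx 1) (- u)).
Proof.
move=> u1 v [v_le _]; rewrite ip_col_mx_const1 subr_ge0.
exact: le_trans (ip_le_enorm _ _ u1) v_le.
Qed.

Lemma Mcone_conformal (E : 'M[R]_(p + q)) (e : R) : 0 < e ->
  (forall l k, E (lshift q l) k = e * (lshift q l == k)%:R) ->
  E^T *m E = (e ^+ 2)%:M -> positive_operator Mc E.
Proof.
move=> e_gt0 rowE gramE v [v_le v_ge0].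
have top : usubmx (E *m v) = e *: usubmx v.
  apply/colP => l; rewrite !mxE (bigD1 (lshift q l)) //= rowE eqxx mulr1.
  by rewrite big1 ?addr0 // => k /negbTE kl; rewrite rowE eq_sym kl mulr0 mul0r.
have bot : ip (dsubmx (E *m v)) (dsubmx (E *m v)) = e ^+ 2 * ip (dsubmx v) (dsubmx v).
  have : ip (E *m v) (E *m v) = e ^+ 2 * ip v v.
    by rewrite !ip_trmx trmx_mul -mulmxA (mulmxA E^T) gramE mul_scalar_mx -scalemxAr mxE.
  by rewrite ip_split (ip_split v) top ipZl ipZr mulrA -expr2 mulrDr => /addrI.
split=> [|i]; last by rewrite top mxE mulr_ge0 ?(ltW e_gt0).
rewrite /enorm bot sqrtrM ?sqr_ge0 // sqrtr_sqr ger0_norm ?(ltW e_gt0) //.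
rewrite top (eq_bigr (fun i => e * usubmx v i 0)) => [|i _]; last by rewrite mxE.
by rewrite -mulr_sumr ler_wpM2l ?(ltW e_gt0).
Qed.

End ExtendedLorentzCone.

Section PositiveOperator.
Context {R : realType} {p q : nat}.
Local Notation Mc := (@Mcone R p q).
Variable A : 'M[R]_(p + q).
Hypothesis posA : positive_operator Mc A.

Lemma positive_Mcone_col_comb (i : 'I_p) (u : 'cV[R]_q) : enorm u <= 1 ->
  Mc (col (lshift q i) A + \sum_(j < q) u j 0 *: col (rshift p j) A).
Proof. by move=> u_le1; rewrite -mulmx_delta_col_mx; apply/posA/Mcone_delta_col. Qed.

Lemma positive_Mcone_col (i : 'I_p) : Mc (col (lshift q i) A).
Proof.
have := positive_Mcone_col_comb i  0; rewrite enorm0 ler01 big1 ?addr0.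
  by apply.
by move=> j _; rewrite mxE scale0r.
Qed.

Lemma positive_Mcone_col_add (i : 'I_p) (j : 'I_q) :
  Mc (col (lshift q i) A + col (rshift p j) A).
Proof.
have := positive_Mcone_col_comb i  (delta_mx j 0).
rewrite (bigD1 j) //= big1 ?addr0 => [|k /negbTE kj]; last by rewrite mxE kj scale0r.
by rewrite mxE !eqxx scale1r enorm_unit ?ip_delta_mxx //; apply.
Qed.

Lemma positive_Mcone_row (i : 'I_p) : Lcone (row (lshift q i) A)^T.
Proof.
move=> k; rewrite mxE mxE; apply: enorm_le_of_ip_ge0 => u u_le1.
have := Mcone_ge0 i _ (posA _ (Mcone_delta_col k _ u_le1)).
rewrite mulmx_delta_col_mx !mxE summxE; congr (0 <= _ + _).
by apply: eq_bigr => j _; rewrite !mxE mulrC.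
Qed.

End PositiveOperator.

Section LyapunovLike.
Context {R : realType} {p q : nat}.
Local Notation Mc := (@Mcone R p q).
Variable A : 'M[R]_(p + q).
Hypothesis p_gt1 : (1 < p)%N.
Hypothesis q_gt0 : (0 < q)%N.
Hypothesis lyaA : lyapunov_like Mc A.

Local Notation Aul := (ulsubmx A).
Local Notation Aur := (ursubmx A).
Local Notation Adl := (dlsubmx A).
Local Notation Adr := (drsubmx A).

Lemma mulmx_col_mx (x : 'cV[R]_p) (u : 'cV[R]_q) :
  A *m col_mx x u = col_mx (Aul *m x + Aur *m u) (Adl *m x + Adr *m u).
Proof. by rewrite -{1}(submxK A) mul_block_col. Qed.

Lemma lyapunov_offdiag (l k : 'I_p) (u : 'cV[R]_q) : l != k -> enorm u <= 1 ->
  Aul l k + (Aur *m u) l 0 = 0.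
Proof.
move=> lk u_le1; pose s : 'cV[R]_(p + q) := col_mx (delta_mx l 0) 0.
have ip_s v : ip v s = usubmx v l 0.
  by rewrite ip_split col_mxKu col_mxKd (ipC _ 0) ip0l addr0 ipC ip_delta_mx.
have := lyaA (col_mx (delta_mx k 0) u) s.
rewrite ip_s mulmx_col_mx col_mxKu mxE -colE mxE; apply.
split; first exact: Mcone_delta_col.
by split; [exact: Mcone_dual_delta | rewrite ip_s col_mxKu mxE (negbTE lk)].
Qed.

Lemma ulsubmx_offdiag (l k : 'I_p) : l != k -> Aul l k = 0.
Proof.
move=> lk; have := lyapunov_offdiag _ _ 0 lk.
by rewrite enorm0 ler01 mulmx0 [_ l 0]mxE addr0; apply.
Qed.

Lemma ursubmx_eq0 : Aur = 0.
Proof.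
apply/matrixP => l j; rewrite [RHS]mxE.
have [k lk] : exists k : 'I_p, l != k.
  have [l0|lN0] := eqVneq (val l) 0%N.
    by exists (Ordinal p_gt1); rewrite -val_eqE /= l0.
  by exists (Ordinal (ltnW p_gt1)); rewrite -val_eqE.
have := lyapunov_offdiag _ _ (delta_mx j 0) lk.
rewrite enorm_unit ?ip_delta_mxx // lexx ulsubmx_offdiag // add0r -colE.
by rewrite [col _ _ _ _]mxE; apply.
Qed.

Lemma lyapunov_diag (k : 'I_p) (u : 'cV[R]_q) : ip u u = 1 ->
  Aul k k = ip (col k Adl) u + ip (Adr *m u) u.
Proof.
move=> u1; pose s : 'cV[R]_(p + q) := col_mx (const_mx 1) (- u).
have compl : compl_set Mc (col_mx (delta_mx k 0) u) s.
  split; first by apply: Mcone_delta_col; rewrite enorm_unit.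
  split; first exact: Mcone_dual_unit.
  by rewrite ip_col_mx_const1 col_mxKu col_mxKd u1 sum_delta_mx subrr.
have /eqP := lyaA _ _ compl.
rewrite ip_col_mx_const1 mulmx_col_mx col_mxKu col_mxKd ursubmx_eq0 mul0mx addr0.
rewrite subr_eq0 -!colE ipDl => /eqP <-.
rewrite (bigD1 k) //= big1 ?addr0 ?mxE // => l lk.
by rewrite mxE ulsubmx_offdiag.
Qed.

Lemma lyapunov_quadratic (k : 'I_p) (u : 'cV[R]_q) : ip u u = 1 ->
  ip (col k Adl) u = 0 /\ ip (Adr *m u) u = Aul k k.
Proof.
move=> u1; have := lyapunov_diag k _ u1.
have := lyapunov_diag k (- u); rewrite ipNl ipNr opprK u1 => /(_ erefl).
rewrite mulmxN !(ipNl, ipNr) opprK => eN eP.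
have adl0 : ip (col k Adl) u = 0 by lra.
by split=> //; rewrite eP adl0 add0r.
Qed.

Lemma dlsubmx_eq0 : Adl = 0.
Proof.
apply/matrixP => j k; have [+ _] := lyapunov_quadratic k _ (ip_delta_mxx j).
by rewrite ipC ip_delta_mx !mxE.
Qed.

Let d := Adr (Ordinal q_gt0) (Ordinal q_gt0).

Lemma ip_drsubmx_unit (u : 'cV[R]_q) : ip u u = 1 -> ip (Adr *m u) u = d.
Proof.
move=> u1; have k : 'I_p := Ordinal (ltnW p_gt1).
have [_ ->] := lyapunov_quadratic k _ u1.
have [_ <-] := lyapunov_quadratic k _ (ip_delta_mxx (Ordinal q_gt0)).
by rewrite ipC ip_delta_mx -colE mxE.
Qed.

Lemma ulsubmx_scalar : Aul = d%:M.
Proof.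
apply/matrixP => l k; rewrite [RHS]mxE; have [<-|lk] := eqVneq l k; last first.
  by rewrite ulsubmx_offdiag.
have [_ <-] := lyapunov_quadratic l _ (ip_delta_mxx (Ordinal q_gt0)).
by rewrite ip_drsubmx_unit ?ip_delta_mxx.
Qed.

Lemma drsubmx_sym : Adr^T + Adr = (d + d)%:M.
Proof.
have entry i j : ip (Adr *m delta_mx i 0) (delta_mx j 0) = Adr j i.
  by rewrite ipC ip_delta_mx -colE mxE.
have diag k : Adr k k = d by rewrite -entry ip_drsubmx_unit ?ip_delta_mxx.
apply/matrixP => i j; rewrite [LHS]mxE [_^T _ _]mxE [RHS]mxE.
have [<-|ij] := eqVneq i j.
  by rewrite diag.
(* Polarize with the unit vector [(e_i + e_j) / sqrt 2]. *)
pose w := delta_mx i 0 + delta_mx j 0 : 'cV[R]_q.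
have ip_ij : ip (delta_mx i 0 : 'cV[R]_q) (delta_mx j 0) = 0.
  by rewrite ip_delta_mx mxE (negbTE ij).
have w2 : ip w w = 2.
  by rewrite !(ipDl, ipDr) !ip_delta_mxx ip_ij ipC ip_ij addr0 add0r.
pose c := Num.sqrt (2^-1 : R).
have c2 : c ^+ 2 = 2^-1 by rewrite sqr_sqrtr // invr_ge0.
have := ip_drsubmx_unit (c *: w).
rewrite -scalemxAr !(ipZl, ipZr) mulrA -expr2 c2 w2 mulVf // => /(_ erefl).
rewrite !(mulmxDr, ipDl, ipDr) !entry !diag mulrA -expr2 c2 => h.
rewrite mulr0n; lra.
Qed.

Lemma lyapunov_Mcone_structure :
  exists d : R, (forall l k, A (lshift q l) k = d * (lshift q l == k)%:R) /\
                A^T + A = (d + d)%:M.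
Proof.
have blockA : A = block_mx d%:M 0 0 Adr.
  by rewrite -ulsubmx_scalar -ursubmx_eq0 -dlsubmx_eq0 submxK.
exists d; split.
  move=> l k; rewrite blockA -[k]splitK; case: (fintype.split k) => k' /=.
    by rewrite block_mxEul !mxE eq_lshift mulr_natr.
  by rewrite block_mxEur mxE eq_lrshift mulr0.
rewrite blockA tr_block_mx !trmx0 tr_scalar_mx add_block_mx drsubmx_sym !addr0.
by rewrite -raddfD -scalar_mx_block.
Qed.

End LyapunovLike.

Lemma positive_inverse_in_Aut {R : realType} {m : nat} (K : 'cV[R]_m -> Prop)
    (B C : 'M[R]_m) :
  B *m C = 1%:M -> positive_operator K B -> positive_operator K C -> in_Aut K B.
Proof.
move=> BC posB posC; split; first by have [] := mulmx1_unit BC.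
move=> y; split=> [Ky|[x [Kx ->]]]; last exact: posB.
by exists (C *m y); split; [exact: posC | rewrite mulmxA BC mul1mx].
Qed.

Lemma expm_positive_Mcone {R : realType} {p q : nat} (A : 'M[R]_(p + q)) (d : R) :
  (forall l k, A (lshift q l) k = d * (lshift q l == k)%:R) ->
  A^T + A = (d + d)%:M -> forall t, positive_operator (@Mcone R p q) (expm t A).
Proof.
move=> rowA symA t; apply: (Mcone_conformal _ _ (expR_gt0 (t * d))).
  by move=> l; apply: expm_row; apply: rowA.
by rewrite (expm_gram t _ _ symA) mulrDr expRD expr2.
Qed.

Theorem mainTheorem2 (R : realType) (p q : nat) (hp : (1 < p)%N) (hq : (0 < q)%N)
    (A : 'M[R]_(p + q)) (hA : positive_operator (@Mcone R p q) A) :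
  (* (i) *) (forall i : 'I_p, Lcone (row (lshift q i) A)^T) /\
  (* (ii) *) (forall i : 'I_p, Mcone (col (lshift q i) A)) /\
  (* (iii) *) (forall (i : 'I_p) (u : 'cV[R]_q), enorm u = 1 ->
      Mcone (col (lshift q i) A + \sum_(j < q) u j 0 *: col (rshift p j) A)) /\
  (* (iv) *) (forall (i : 'I_p) (j : 'I_q),
      Mcone (col (lshift q i) A + col (rshift p j) A)) /\
  (* (v) *) (lyapunov_like (@Mcone R p q) A ->
      (forall t : R, in_Aut (@Mcone R p q) (expm t A)) /\
      (forall t : R, positive_operator (@Mcone R p q) (expm t A))).
Proof.
split; first exact: positive_Mcone_row.
split; first exact: positive_Mcone_col.
split; first by move=> i u u1; apply: positive_Mcone_col_comb => //; rewrite u1.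
split; first exact: positive_Mcone_col_add.
move=> lyaA; have [d [rowA symA]] := lyapunov_Mcone_structure A hp hq lyaA.
have posE := expm_positive_Mcone _ _ rowA symA.
split=> t //; exact: positive_inverse_in_Aut (expmN_inv t A) (posE t) (posE (- t)).
Qed.
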